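(* Let $\mathcal{X}_1,\mathcal{X}_2$ be non-empty sets, $\mathcal{B}_i\subseteq\mathcal{P}(\mathcal{X}_i)\setminus\{\emptyset\}$ and $\underline{P}_i$ a coherent conditional lower prevision on $\mathcal{C}_i\subseteq\mathcal{C}(\mathcal{X}_i)$ for $i\in\{1,2\}$, and let $\mathcal{C}\subseteq\mathcal{C}(\mathcal{X}_1\times\mathcal{X}_2)$ be an independent domain containing $\mathcal{C}_1$ and $\mathcal{C}_2$. Then the restriction of $\underline{P}_1\otimes\underline{P}_2$ to $\mathcal{C}$ is an independent product of $\underline{P}_1$ and $\underline{P}_2$.
   Context: Gambles on a non-empty set $\mathcal{X}$ are bounded real functions; $\mathcal{G}(\mathcal{X})$ is the set of gambles, $\mathcal{G}_{>0}(\mathcal{X})$ the non-negative non-zero gambles, $\mathbb{I}_A$ the indicator of $A$. For $\mathcal{A}\subseteq\mathcal{G}(\mathcal{X})$: $\mathrm{posi}(\mathcal{A}):=\{\sum_{i=1}^n\lambda_if_i\colon n\in\mathbb{N},\lambda_i>0,f_i\in\mathcal{A}\}$, $\mathcal{E}(\mathcal{A}):=\mathrm{posi}(\mathcal{A}\cup\mathcal{G}_{>0}(\mathcal{X}))$. A coherent set of desirable gambles $\mathcal{D}\subseteq\mathcal{G}(\mathcal{X})$ satisfies: (D1) $f\geq0,f\neq0\Rightarrow f\in\mathcal{D}$; (D2) $f\in\mathcal{D},\lambda>0\Rightarrow\lambda f\in\mathcal{D}$; (D3) $f,g\in\mathcal{D}\Rightarrow f+g\in\mathcal{D}$; (D4)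 $f\leq0\Rightarrow f\notin\mathcal{D}$. $\mathcal{C}(\mathcal{X}):=\mathcal{G}(\mathcal{X})\times(\mathcal{P}(\mathcal{X})\setminus\{\emptyset\})$; a conditional lower prevision on $\mathcal{C}\subseteq\mathcal{C}(\mathcal{X})$ is a map $(f,B)\mapsto\underline{P}(f\vert B)\in\mathbb{R}\cup\{\pm\infty\}$. For $\mathcal{D}\subseteq\mathcal{G}(\mathcal{X})$, $\underline{P}_{\mathcal{D}}(f\vert B):=\sup\{\mu\in\mathbb{R}\colon[f-\mu]\mathbb{I}_B\in\mathcal{D}\}$. $\underline{P}$ is coherent if $\underline{P}=\underline{P}_{\mathcal{D}}$ on its domain for some coherent set of desirable gambles $\mathcal{D}$. For coherent $\underline{P}$ on $\mathcal{C}$, $\mathcal{E}(\underline{P}):=\mathcal{E}(\{[f-\mu]\mathbb{I}_B\colon(f,B)\in\mathcal{C},\mu<\underline{P}(f\vert B)\})$. Gambles/events on $\mathcal{X}_i$ are identified with their cylindrical extensions to $\mathcal{X}_1\times\mathcal{X}_2$ ($B\subseteq\mathcal{X}_1$ with $B\times\mathcal{X}_2$, etc.). For coherent sets of desirable gambles $\mathcal{D}_1,\mathcal{D}_2$: $\mathcal{D}_1\otimes\mathcal{D}_2:=\mathcal{E}(\mathcal{A}_{1\to2}\cup\mathcal{A}_{2\to1})$, $\mathcal{A}_{1\to2}:=\{f_2(X_2)\mathbb{I}_{B_1}(X_1)\colon f_2\in\mathcal{D}_2,B_1\in\mathcal{B}_1\cup\{\mathcal{X}_1\}\}$, $\mathcal{A}_{2\to1}:=\{f_1(X_1)\mathbb{I}_{B_2}(X_2)\colon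 f_1\in\mathcal{D}_1,B_2\in\mathcal{B}_2\cup\{\mathcal{X}_2\}\}$; $(\underline{P}_1\otimes\underline{P}_2)(f\vert B):=\underline{P}_{\mathcal{D}}(f\vert B)$ for $(f,B)\in\mathcal{C}(\mathcal{X}_1\times\mathcal{X}_2)$, $\mathcal{D}=\mathcal{E}(\underline{P}_1)\otimes\mathcal{E}(\underline{P}_2)$. A domain $\mathcal{C}\subseteq\mathcal{C}(\mathcal{X}_1\times\mathcal{X}_2)$ is independent if for all $\{i,j\}=\{1,2\}$, $(f_i,B_i)\in\mathcal{C}(\mathcal{X}_i)$ and $B_j\in\mathcal{B}_j$: $(f_i,B_i)\in\mathcal{C}\iff(f_i,B_i\cap B_j)\in\mathcal{C}$. A coherent $\underline{P}$ on an independent domain $\mathcal{C}$ is epistemically independent if $\underline{P}(f_i\vert B_i)=\underline{P}(f_i\vert B_i\cap B_j)$ for all $\{i,j\}=\{1,2\}$, all $(f_i,B_i)\in\mathcal{C}$ with $f_i,B_i$ on $\mathcal{X}_i$, and all $B_j\in\mathcal{B}_j$. An independent product of $\underline{P}_1,\underline{P}_2$ is an epistemically independent coherent conditional lower prevision on $\mathcal{C}$ that coincides with $\underline{P}_i$ on $\mathcal{C}_i$ for $i=1,2$. *)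

From Stdlib Require Import Reals Bool.
From Coquelicot Require Import Rbar Lub.
Open Scope R_scope.

Definition gamble {X : Type} (f : X -> R) : Prop :=
  exists M, forall x, Rabs (f x) <= M.

Definition pos_gamble {X : Type} (f : X -> R) : Prop :=
  gamble f /\ (forall x, 0 <= f x) /\ (exists x, f x <> 0).

Definition nonempty_event {X : Type} (B : X -> bool) : Prop :=
  exists x, B x = true.

Definition indic {X : Type} (B : X -> bool) (x : X) : R :=
  if B x then 1 else 0.

Fixpoint rsum (n : nat) (F : nat -> R) : R :=
  match n with O => 0 | S m => rsum m F + F m end.

Definition posi {X : Type} (A : (X -> R) -> Prop) : (X -> R) -> Prop :=
  fun g => exists (n : nat) (lam : nat -> R) (fs : nat -> X -> R),
    (1 <= n)%nat /\
    (forall i, (i < n)%nat -> 0 < lam i /\ A (fs i)) /\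
    (forall x, g x = rsum n (fun i => lam i * fs i x)).

Definition Ext {X : Type} (A : (X -> R) -> Prop) : (X -> R) -> Prop :=
  posi (fun f => A f \/ pos_gamble f).

Definition coherent_D {X : Type} (D : (X -> R) -> Prop) : Prop :=
  (forall f, D f -> gamble f) /\
  (forall f, gamble f -> (forall x, 0 <= f x) -> (exists x, f x <> 0) -> D f) /\
  (forall f lam, D f -> 0 < lam -> D (fun x => lam * f x)) /\
  (forall f g, D f -> D g -> D (fun x => f x + g x)) /\
  (forall f, (forall x, f x <= 0) -> ~ D f).

Definition cgamble {X : Type} (f : X -> R) (mu : R) (B : X -> bool) : X -> R :=
  fun x => (f x - mu) * indic B x.

(* P_D(f|B) := sup { mu : [f-mu] I_B ∈ D } (sup of empty set = -oo) *)
Definition lowprev_D {X : Type} (D : (X -> R) -> Prop) (f : X -> R) (B : X -> bool)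
  : Rbar := Lub_Rbar (fun mu => D (cgamble f mu B)).

Definition in_CX {X : Type} (f : X -> R) (B : X -> bool) : Prop :=
  gamble f /\ nonempty_event B.

Definition sub_CX {X : Type} (C : (X -> R) -> (X -> bool) -> Prop) : Prop :=
  forall f B, C f B -> in_CX f B.

Definition coherent_lp {X : Type} (C : (X -> R) -> (X -> bool) -> Prop)
  (P : (X -> R) -> (X -> bool) -> Rbar) : Prop :=
  exists D, coherent_D D /\ forall f B, C f B -> P f B = lowprev_D D f B.

Definition E_of_P {X : Type} (C : (X -> R) -> (X -> bool) -> Prop)
  (P : (X -> R) -> (X -> bool) -> Rbar) : (X -> R) -> Prop :=
  Ext (fun g => exists f B mu, C f B /\ Rbar_lt (Finite mu) (P f B)
                               /\ g = cgamble f mu B).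

Definition ext1 {X1 X2 : Type} (f : X1 -> R) : X1 * X2 -> R := fun p => f (fst p).
Definition ext2 {X1 X2 : Type} (f : X2 -> R) : X1 * X2 -> R := fun p => f (snd p).
Definition eext1 {X1 X2 : Type} (B : X1 -> bool) : X1 * X2 -> bool := fun p => B (fst p).
Definition eext2 {X1 X2 : Type} (B : X2 -> bool) : X1 * X2 -> bool := fun p => B (snd p).
Definition erect {X1 X2 : Type} (B1 : X1 -> bool) (B2 : X2 -> bool) : X1 * X2 -> bool :=
  fun p => andb (B1 (fst p)) (B2 (snd p)).

Definition A12 {X1 X2 : Type} (B1s : (X1 -> bool) -> Prop) (D2 : (X2 -> R) -> Prop)
  : (X1 * X2 -> R) -> Prop :=
  fun g => exists f2 B1, D2 f2 /\ (B1s B1 \/ B1 = (fun _ => true)) /\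
           g = (fun p => f2 (snd p) * indic B1 (fst p)).

Definition A21 {X1 X2 : Type} (B2s : (X2 -> bool) -> Prop) (D1 : (X1 -> R) -> Prop)
  : (X1 * X2 -> R) -> Prop :=
  fun g => exists f1 B2, D1 f1 /\ (B2s B2 \/ B2 = (fun _ => true)) /\
           g = (fun p => f1 (fst p) * indic B2 (snd p)).

Definition dprod {X1 X2 : Type} (B1s : (X1 -> bool) -> Prop) (B2s : (X2 -> bool) -> Prop)
  (D1 : (X1 -> R) -> Prop) (D2 : (X2 -> R) -> Prop) : (X1 * X2 -> R) -> Prop :=
  Ext (fun g => A12 B1s D2 g \/ A21 B2s D1 g).

Definition lp_prod {X1 X2 : Type} (B1s : (X1 -> bool) -> Prop) (B2s : (X2 -> bool) -> Prop)
  (C1 : (X1 -> R) -> (X1 -> bool) -> Prop) (P1 : (X1 -> R) -> (X1 -> bool) -> Rbar)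
  (C2 : (X2 -> R) -> (X2 -> bool) -> Prop) (P2 : (X2 -> R) -> (X2 -> bool) -> Rbar)
  : (X1 * X2 -> R) -> (X1 * X2 -> bool) -> Rbar :=
  fun f B => lowprev_D (dprod B1s B2s (E_of_P C1 P1) (E_of_P C2 P2)) f B.

Definition indep_domain {X1 X2 : Type} (B1s : (X1 -> bool) -> Prop) (B2s : (X2 -> bool) -> Prop)
  (C : (X1 * X2 -> R) -> (X1 * X2 -> bool) -> Prop) : Prop :=
  (forall f1 B1 B2, in_CX f1 B1 -> B2s B2 ->
     (C (ext1 f1) (eext1 B1) <-> C (ext1 f1) (erect B1 B2))) /\
  (forall f2 B2 B1, in_CX f2 B2 -> B1s B1 ->
     (C (ext2 f2) (eext2 B2) <-> C (ext2 f2) (erect B1 B2))).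

Definition epist_indep {X1 X2 : Type} (B1s : (X1 -> bool) -> Prop) (B2s : (X2 -> bool) -> Prop)
  (C : (X1 * X2 -> R) -> (X1 * X2 -> bool) -> Prop)
  (P : (X1 * X2 -> R) -> (X1 * X2 -> bool) -> Rbar) : Prop :=
  sub_CX C /\ indep_domain B1s B2s C /\ coherent_lp C P /\
  (forall f1 B1 B2, in_CX f1 B1 -> C (ext1 f1) (eext1 B1) -> B2s B2 ->
     P (ext1 f1) (eext1 B1) = P (ext1 f1) (erect B1 B2)) /\
  (forall f2 B2 B1, in_CX f2 B2 -> C (ext2 f2) (eext2 B2) -> B1s B1 ->
     P (ext2 f2) (eext2 B2) = P (ext2 f2) (erect B1 B2)).

Definition indep_product {X1 X2 : Type} (B1s : (X1 -> bool) -> Prop) (B2s : (X2 -> bool) -> Prop)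
  (C1 : (X1 -> R) -> (X1 -> bool) -> Prop) (P1 : (X1 -> R) -> (X1 -> bool) -> Rbar)
  (C2 : (X2 -> R) -> (X2 -> bool) -> Prop) (P2 : (X2 -> R) -> (X2 -> bool) -> Rbar)
  (C : (X1 * X2 -> R) -> (X1 * X2 -> bool) -> Prop)
  (P : (X1 * X2 -> R) -> (X1 * X2 -> bool) -> Rbar) : Prop :=
  epist_indep B1s B2s C P /\
  (forall f B, C1 f B -> P (ext1 f) (eext1 B) = P1 f B) /\
  (forall f B, C2 f B -> P (ext2 f) (eext2 B) = P2 f B).

(* Write [D_i = E(P_i)].  The heart of the matter is that [D_1 (x) D_2] contains no gamble
   that is nowhere positive.  An element of it is a finite sum of terms [a(y2) I_E(y1)] with
   [a] in [D_2], terms [b(y1) I_F(y2)] with [b] in [D_1], and nonnegative gambles.  A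
   Fourier-Motzkin induction (Ville's lemma) produces a positive linear functional [L] on
   gambles on [X2], a finite combination of point masses, with [L a > 0] for the finitely many
   [a]'s involved; averaging over [y2] with [L] leaves a nonnegative combination of the [b]'s
   plus nonnegative terms, and coherence of [D_1] makes it positive somewhere.
   Hence [D_1 (x) D_2] is coherent, and [k(y1) I_B(y2)] belongs to it iff [k] is in [D_1]:
   otherwise [D_1] with [- k] adjoined would still be coherent, yet its product would contain
   [k I_B + (- k) I_B = 0].  So the product lower prevision of [k] given [B1 x B2] or given
   [B1 x X2] is the lower prevision of [k] given [B1] under [D_1], which is [P_1] on [C_1];
   the second marginal follows by symmetry. *)

From Stdlib Require Import Reals Lra Lia Bool Classical ClassicalChoice FunctionalExtensionality.
From Coquelicot Require Import Rbar Lub.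
Open Scope R_scope.

Lemma rsum_ext n F G : (forall i, (i < n)%nat -> F i = G i) -> rsum n F = rsum n G.
Proof.
  induction n as [|n IH]; intros H; simpl; auto.
  rewrite IH by (intros; apply H; lia). rewrite H by lia. reflexivity.
Qed.

Lemma rsum_plus n F G : rsum n (fun i => F i + G i) = rsum n F + rsum n G.
Proof. induction n as [|n IH]; simpl; [lra|]. rewrite IH. ring. Qed.

Lemma rsum_scal n k F : rsum n (fun i => k * F i) = k * rsum n F.
Proof. induction n as [|n IH]; simpl; [lra|]. rewrite IH. ring. Qed.

Lemma rsum_app n1 n2 F : rsum (n1 + n2) F = rsum n1 F + rsum n2 (fun i => F (n1 + i)%nat).
Proof.
  induction n2 as [|n2 IH]; simpl; [rewrite Nat.add_0_r; ring|].
  rewrite Nat.add_succ_r; simpl. rewrite IH. ring.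
Qed.

Lemma rsum_le n F G : (forall i, (i < n)%nat -> F i <= G i) -> rsum n F <= rsum n G.
Proof.
  induction n as [|n IH]; intros H; simpl; [lra|].
  apply Rplus_le_compat; [apply IH; intros; apply H|apply H]; lia.
Qed.

Lemma rsum_zero n F : (forall i, (i < n)%nat -> F i = 0) -> rsum n F = 0.
Proof.
  induction n as [|n IH]; intros H; simpl; auto.
  rewrite IH by (intros; apply H; lia). rewrite H by lia. ring.
Qed.

Lemma rsum_nonneg n F : (forall i, (i < n)%nat -> 0 <= F i) -> 0 <= rsum n F.
Proof. intros H. rewrite <- (rsum_zero n (fun _ => 0)) by auto. apply rsum_le; auto. Qed.

Lemma rsum_pos n F i :
  (forall j, (j < n)%nat -> 0 <= F j) -> (i < n)%nat -> 0 < F i -> 0 < rsum n F.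
Proof.
  induction n as [|n IH]; intros H Hi Hpos; simpl; [lia|].
  assert (0 <= rsum n F) by (apply rsum_nonneg; intros; apply H; lia).
  assert (0 <= F n) by (apply H; lia).
  destruct (Nat.eq_dec i n) as [->|Hne]; [lra|].
  assert (0 < rsum n F) by (apply IH; [intros; apply H; lia|lia|auto]). lra.
Qed.

Record positive_linear {X : Type} (L : (X -> R) -> R) : Prop := {
  pl_add : forall f g, L (fun x => f x + g x) = L f + L g;
  pl_scal : forall a f, L (fun x => a * f x) = a * L f;
  pl_nonneg : forall f, (forall x, 0 <= f x) -> 0 <= L f }.

Section PositiveLinear.
Context {X : Type} (L : (X -> R) -> R) (HL : positive_linear L).

Lemma pl_zero : L (fun _ => 0) = 0.
Proof.
  replace (fun _ : X => 0) with (fun x : X => 0 * (fun _ => 0) x)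
    by (extensionality x; ring).
  rewrite (pl_scal _ HL). ring.
Qed.

Lemma pl_le f g : (forall x, f x <= g x) -> L f <= L g.
Proof.
  intros H.
  replace g with (fun x => f x + (g x - f x)) by (extensionality x; ring).
  rewrite (pl_add _ HL).
  assert (0 <= L (fun x => g x - f x)) by (apply (pl_nonneg _ HL); intros x; specialize (H x); lra).
  lra.
Qed.

Lemma pl_rsum n (F : nat -> X -> R) :
  L (fun x => rsum n (fun i => F i x)) = rsum n (fun i => L (F i)).
Proof.
  induction n as [|n IH]; simpl; [apply pl_zero|].
  rewrite (pl_add _ HL), IH. reflexivity.
Qed.

Lemma pl_witness f : 0 < L f -> exists x, 0 < f x.
Proof.
  intros Hf. apply NNPP. intros Hno.
  assert (L f <= L (fun _ => 0)).
  { apply pl_le. intros x. apply Rnot_lt_le. intros Hx. apply Hno. eauto. }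
  rewrite pl_zero in H. lra.
Qed.

End PositiveLinear.

Lemma positive_linear_zero {X : Type} : positive_linear (fun _ : X -> R => 0).
Proof. split; intros; lra. Qed.

Lemma positive_linear_eval {X : Type} (x : X) : positive_linear (fun f : X -> R => f x).
Proof. split; auto. Qed.

Lemma positive_linear_comb {X : Type} (L M : (X -> R) -> R) (K : R) :
  positive_linear L -> positive_linear M -> 0 <= K ->
  positive_linear (fun f => K * L f + M f).
Proof.
  intros HL HM HK. split.
  - intros f g. rewrite (pl_add _ HL), (pl_add _ HM). ring.
  - intros a f. rewrite (pl_scal _ HL), (pl_scal _ HM). ring.
  - intros f Hf. pose proof (pl_nonneg _ HL f Hf). pose proof (pl_nonneg _ HM f Hf). nra.
Qed.

(* Fourier-Motzkin elimination of [z]: each pair with [z p > 0 > z q] is combined so that [z]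
   itself cancels. *)
Definition fm_elim {X : Type} (z f : X -> R) (y : X + X * X) : R :=
  match y with
  | inl x => if Rle_dec 0 (z x) then f x else 0
  | inr (p, q) =>
      if Rlt_dec 0 (z p) then if Rlt_dec (z q) 0 then z p * f q - z q * f p else 0 else 0
  end.

Ltac case_fm_elim y :=
  destruct y as [?x|[?p ?q]]; simpl;
  repeat match goal with
         | |- context [Rle_dec ?a ?b] => destruct (Rle_dec a b)
         | |- context [Rlt_dec ?a ?b] => destruct (Rlt_dec a b)
         end.

Section FourierMotzkin.
Context {X : Type} (z : X -> R).

Lemma fm_elim_lin a f g y :
  fm_elim z (fun x => a * f x + g x) y = a * fm_elim z f y + fm_elim z g y.
Proof. case_fm_elim y; ring. Qed.

Lemma fm_elim_rsum n (c : nat -> R) (F : nat -> X -> R) y :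
  fm_elim z (fun x => rsum n (fun i => c i * F i x)) y = rsum n (fun i => c i * fm_elim z (F i) y).
Proof.
  induction n as [|n IH]; simpl; [case_fm_elim y; ring|].
  rewrite <- IH, <- (Rplus_comm (c n * _)), <- fm_elim_lin.
  f_equal. extensionality x. ring.
Qed.

Lemma fm_elim_nonneg f y : (forall x, 0 <= f x) -> 0 <= fm_elim z f y.
Proof.
  intros Hf. case_fm_elim y; try lra.
  - apply Hf.
  - pose proof (Hf p). pose proof (Hf q). nra.
Qed.

Lemma fm_elim_self_nonneg y : 0 <= fm_elim z z y.
Proof. case_fm_elim y; nra. Qed.

Lemma positive_linear_fm_elim (L : (X + X * X -> R) -> R) :
  positive_linear L -> positive_linear (fun f => L (fm_elim z f)).
Proof.
  intros HL. split.
  - intros f g. rewrite <- (pl_add _ HL). f_equal. extensionality y. case_fm_elim y; ring.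
  - intros a f. rewrite <- (pl_scal _ HL). f_equal. extensionality y. case_fm_elim y; ring.
  - intros f Hf. apply (pl_nonneg _ HL). intros y. apply fm_elim_nonneg, Hf.
Qed.

(* The sign conditions on [fm_elim z G] say that every ratio [G q / - z q] with [z q < 0]
   lies below every ratio [- G p / z p] with [z p > 0]; the threshold [t] is the supremum
   of the former. *)
Lemma fm_threshold (G : X -> R) (p0 : X) :
  0 < z p0 -> (forall y, fm_elim z G y <= 0) ->
  exists t, 0 <= t /\ forall x, G x + t * z x <= 0.
Proof.
  intros Hp0 HG.
  assert (Hnn : forall x, 0 <= z x -> G x <= 0).
  { intros x Hx. specialize (HG (inl x)). simpl in HG. destruct Rle_dec; [auto|lra]. }
  assert (Hratio : forall p q, 0 < z p -> z q < 0 -> G q / - z q <= - G p / z p).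
  { intros p q Hp Hq. specialize (HG (inr (p, q))). simpl in HG.
    destruct Rlt_dec; [|lra]. destruct Rlt_dec; [|lra].
    assert (E1 : G q / - z q * - z q = G q) by (field; lra).
    assert (E2 : - G p / z p * z p = - G p) by (field; lra).
    assert (0 < - z q * z p) by nra.
    set (u := G q / - z q) in *. set (w := - G p / z p) in *. nra. }
  assert (Hupper : forall p, 0 < z p -> 0 <= - G p / z p).
  { intros p Hp. assert (G p <= 0) by (apply Hnn; lra).
    unfold Rdiv. apply Rmult_le_pos; [lra|]. left. apply Rinv_0_lt_compat, Hp. }
  set (T := fun s => s = 0 \/ exists q, z q < 0 /\ s = G q / - z q).
  assert (HT : forall p, 0 < z p -> is_upper_bound T (- G p / z p)).
  { intros p Hp s [->|[q [Hq ->]]]; [apply Hupper|apply Hratio]; auto. }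
  destruct (completeness T) as [t [Hub Hlub]].
  { exists (- G p0 / z p0). apply HT, Hp0. }
  { exists 0. left. reflexivity. }
  exists t. split; [apply Hub; left; reflexivity|].
  intros x. destruct (Rtotal_order (z x) 0) as [Hx|[Hx|Hx]].
  - assert (Ht : G x / - z x <= t) by (apply Hub; right; eauto).
    assert (G x / - z x * - z x = G x) by (field; lra).
    set (u := G x / - z x) in *. nra.
  - rewrite Hx. assert (G x <= 0) by (apply Hnn; lra). lra.
  - assert (Ht : t <= - G x / z x) by (apply Hlub, HT, Hx).
    assert (- G x / z x * z x = - G x) by (field; lra).
    set (w := - G x / z x) in *. nra.
Qed.

End FourierMotzkin.

Definition no_nonpositive_combination {X : Type} (n : nat) (a : nat -> X -> R) : Prop :=
  forall c : nat -> R, (forall i, (i < n)%nat -> 0 <= c i) -> (exists i, (i < n)%nat /\ 0 < c i) ->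
  exists x, 0 < rsum n (fun i => c i * a i x).

Lemma no_nonpositive_combination_last {X : Type} n (a : nat -> X -> R) :
  no_nonpositive_combination (S n) a -> exists x, 0 < a n x.
Proof.
  intros H. destruct (H (fun i => if Nat.eq_dec i n then 1 else 0)) as [x Hx].
  - intros i _. destruct Nat.eq_dec; lra.
  - exists n. split; [lia|]. destruct Nat.eq_dec; [lra|congruence].
  - exists x. simpl in Hx. rewrite rsum_zero in Hx.
    + destruct (Nat.eq_dec n n); [lra|congruence].
    + intros i Hi. destruct (Nat.eq_dec i n); [lia|ring].
Qed.

Lemma no_nonpositive_combination_fm_elim {X : Type} n (a : nat -> X -> R) :
  no_nonpositive_combination (S n) a ->
  no_nonpositive_combination n (fun i => fm_elim (a n) (a i)).
Proof.
  intros H c Hc Hc0. apply NNPP. intros Hno.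
  set (G := fun x => rsum n (fun i => c i * a i x)).
  assert (HG : forall y, fm_elim (a n) G y <= 0).
  { intros y. unfold G. rewrite fm_elim_rsum. apply Rnot_lt_le. intros Hy. apply Hno. eauto. }
  destruct (no_nonpositive_combination_last n a H) as [p0 Hp0].
  destruct (fm_threshold (a n) G p0 Hp0 HG) as [t [Ht HGt]].
  destruct (H (fun i => if Nat.eq_dec i n then t else c i)) as [x Hx].
  - intros i Hi. destruct (Nat.eq_dec i n); [auto|apply Hc; lia].
  - destruct Hc0 as [i [Hi Hci]]. exists i. split; [lia|]. destruct (Nat.eq_dec i n); [lia|auto].
  - simpl in Hx. rewrite (rsum_ext n _ (fun i => c i * a i x)) in Hx.
    + destruct (Nat.eq_dec n n); [|congruence]. specialize (HGt x). unfold G in HGt. lra.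
    + intros i Hi. destruct (Nat.eq_dec i n); [lia|auto].
Qed.

Lemma exists_large_scale n (u v : nat -> R) :
  (forall i, (i < n)%nat -> 0 < u i) ->
  exists K, 0 <= K /\ forall i, (i < n)%nat -> 0 < K * u i + v i.
Proof.
  induction n as [|n IH]; intros Hu; [exists 0; split; [lra|intros; lia]|].
  destruct IH as [K [HK HKi]]; [intros; apply Hu; lia|].
  assert (Hun : 0 < u n) by (apply Hu; lia).
  exists (Rmax K ((Rabs (v n) + 1) / u n)). split; [eapply Rle_trans; [|apply Rmax_l]; auto|].
  intros i Hi. destruct (Nat.eq_dec i n) as [->|Hne].
  - assert (Hb : (Rabs (v n) + 1) / u n * u n = Rabs (v n) + 1) by (field; lra).
    assert ((Rabs (v n) + 1) / u n <= Rmax K ((Rabs (v n) + 1) / u n)) by apply Rmax_r.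
    pose proof (Rle_abs (- v n)). rewrite Rabs_Ropp in *. nra.
  - assert (K <= Rmax K ((Rabs (v n) + 1) / u n)) by apply Rmax_l.
    assert (0 < K * u i + v i) by (apply HKi; lia).
    assert (0 < u i) by (apply Hu; lia). nra.
Qed.

(* Fourier-Motzkin elimination of the last function turns [n + 1] functions on [X] into [n]
   functions on [X + X * X]; the functional obtained for these pulls back along [fm_elim],
   and once it is scaled up, adding the point mass at a point where the eliminated function
   is positive makes all [n + 1] values positive. *)
Theorem exists_positive_functional n :
  forall (X : Type) (a : nat -> X -> R), no_nonpositive_combination n a ->
  exists L, positive_linear L /\ forall i, (i < n)%nat -> 0 < L (a i).
Proof.
  induction n as [|n IH]; intros X a H.
  { exists (fun _ => 0). split; [apply positive_linear_zero|intros; lia]. }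
  destruct (no_nonpositive_combination_last n a H) as [p0 Hp0].
  destruct (IH _ _ (no_nonpositive_combination_fm_elim n a H)) as [L' [HL' HL'pos]].
  pose proof (positive_linear_fm_elim (a n) L' HL') as HL0.
  set (L0 := fun f => L' (fm_elim (a n) f)) in HL0.
  destruct (exists_large_scale n (fun i => L0 (a i)) (fun i => a i p0)) as [K [HK HKi]];
    [apply HL'pos|].
  exists (fun f => K * L0 f + f p0). split.
  - apply positive_linear_comb; [auto|apply positive_linear_eval|auto].
  - intros i Hi. destruct (Nat.eq_dec i n) as [->|Hne]; [|apply HKi; lia].
    assert (0 <= L0 (a n)) by (apply (pl_nonneg _ HL'); intros; apply fm_elim_self_nonneg).
    nra.
Qed.

Lemma indic_bounds {X : Type} (B : X -> bool) x : 0 <= indic B x <= 1.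
Proof. unfold indic. destruct (B x); lra. Qed.

Lemma indic_true {X : Type} (B : X -> bool) x : B x = true -> indic B x = 1.
Proof. unfold indic. intros ->. reflexivity. Qed.

Lemma gamble_lin {X : Type} (f g : X -> R) a b :
  gamble f -> gamble g -> gamble (fun x => a * f x + b * g x).
Proof.
  intros [M HM] [N HN]. exists (Rabs a * M + Rabs b * N). intros x.
  eapply Rle_trans; [apply Rabs_triang|]. rewrite !Rabs_mult.
  apply Rplus_le_compat; apply Rmult_le_compat_l; auto; apply Rabs_pos.
Qed.

Lemma gamble_const {X : Type} (r : R) : @gamble X (fun _ => r).
Proof. exists (Rabs r). intros. lra. Qed.

Lemma gamble_mul_indic {X Y Z : Type} (f : X -> R) (B : Z -> bool) (u : Y -> X) (v : Y -> Z) :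
  gamble f -> gamble (fun y => f (u y) * indic B (v y)).
Proof.
  intros [M HM]. exists M. intros y. rewrite Rabs_mult.
  pose proof (indic_bounds B (v y)). pose proof (HM (u y)). pose proof (Rabs_pos (f (u y))).
  rewrite (Rabs_pos_eq (indic B (v y))) by lra. nra.
Qed.

Lemma gamble_cgamble {X : Type} (f : X -> R) mu B : gamble f -> gamble (cgamble f mu B).
Proof.
  intros Hf.
  replace (cgamble f mu B) with (fun x => (1 * f x + - mu * 1) * indic B x)
    by (extensionality x; unfold cgamble; ring).
  exact (gamble_mul_indic _ B (fun x : X => x) (fun x => x)
           (gamble_lin f (fun _ => 1) 1 (- mu) Hf (gamble_const 1))).
Qed.

Lemma gamble_rsum {X : Type} n (c : nat -> R) (fs : nat -> X -> R) :
  (forall i, (i < n)%nat -> gamble (fs i)) -> gamble (fun x => rsum n (fun i => c i * fs i x)).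
Proof.
  induction n as [|n IH]; intros H; simpl; [apply gamble_const|].
  destruct IH as [M HM]; [intros; apply H; lia|].
  destruct (H n (Nat.lt_succ_diag_r n)) as [M' HM'].
  exists (M + Rabs (c n) * M'). intros x.
  eapply Rle_trans; [apply Rabs_triang|]. rewrite Rabs_mult.
  apply Rplus_le_compat; [auto|apply Rmult_le_compat_l; [apply Rabs_pos|auto]].
Qed.

Section Posi.
Context {X : Type} (A : (X -> R) -> Prop).

Lemma posi_single f : A f -> posi A f.
Proof.
  intros Hf. exists 1%nat, (fun _ => 1), (fun _ => f).
  split; [lia|split; [intros; split; [lra|auto]|intros x; simpl; ring]].
Qed.

Lemma posi_plus f g : posi A f -> posi A g -> posi A (fun x => f x + g x).
Proof.
  intros [n1 [l1 [fs1 [H1 [H1a H1b]]]]] [n2 [l2 [fs2 [H2 [H2a H2b]]]]].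
  exists (n1 + n2)%nat, (fun i => if Nat.ltb i n1 then l1 i else l2 (i - n1)%nat),
    (fun i => if Nat.ltb i n1 then fs1 i else fs2 (i - n1)%nat).
  split; [lia|split].
  - intros i Hi. destruct (Nat.ltb_spec i n1); [apply H1a; auto|apply H2a; lia].
  - intros x. rewrite rsum_app, H1b, H2b. f_equal.
    + apply rsum_ext. intros i Hi. destruct (Nat.ltb_spec i n1); [auto|lia].
    + apply rsum_ext. intros i Hi. destruct (Nat.ltb_spec (n1 + i) n1); [lia|].
      replace (n1 + i - n1)%nat with i by lia. reflexivity.
Qed.

Lemma posi_scal f l : posi A f -> 0 < l -> posi A (fun x => l * f x).
Proof.
  intros [n [lam [fs [Hn [Ha Hb]]]]] Hl. exists n, (fun i => l * lam i), fs.
  split; [auto|split].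
  - intros i Hi. destruct (Ha i Hi). split; [apply Rmult_lt_0_compat|]; auto.
  - intros x. rewrite Hb, <- rsum_scal. apply rsum_ext. intros. ring.
Qed.

Lemma posi_incl (A' : (X -> R) -> Prop) f : (forall g, A g -> A' g) -> posi A f -> posi A' f.
Proof.
  intros HA [n [lam [fs [Hn [Ha Hb]]]]]. exists n, lam, fs.
  split; [auto|split; [intros i Hi; destruct (Ha i Hi); auto|auto]].
Qed.

Lemma posi_gamble f : (forall g, A g -> gamble g) -> posi A f -> gamble f.
Proof.
  intros HA [n [lam [fs [_ [Ha Hb]]]]].
  replace f with (fun x => rsum n (fun i => lam i * fs i x)) by (extensionality x; auto).
  apply gamble_rsum. intros i Hi. apply HA, Ha, Hi.
Qed.

Lemma posi_param {T : Type} (Q : T -> Prop) (phi : T -> X -> R) f :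
  (forall g, A g -> exists t, Q t /\ g = phi t) -> posi A f ->
  exists n (c : nat -> R) (t : nat -> T), (1 <= n)%nat /\
    (forall i, (i < n)%nat -> 0 < c i /\ Q (t i)) /\
    forall x, f x = rsum n (fun i => c i * phi (t i) x).
Proof.
  intros HA [n [c [fs [Hn [Hfs Hf]]]]].
  destruct (HA (fs 0%nat) (proj2 (Hfs 0%nat Hn))) as [t0 _].
  assert (Ht : forall i, exists t, (i < n)%nat -> Q t /\ fs i = phi t).
  { intros i. destruct (Compare_dec.lt_dec i n) as [Hi|Hi]; [|exists t0; lia].
    destruct (HA (fs i) (proj2 (Hfs i Hi))) as [t Ht]. eauto. }
  destruct (choice _ Ht) as [t Hti]. exists n, c, t. split; [auto|split].
  - intros i Hi. split; [apply Hfs, Hi|apply Hti, Hi].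
  - intros x. rewrite Hf. apply rsum_ext. intros i Hi. rewrite (proj2 (Hti i Hi)). reflexivity.
Qed.

End Posi.

Section Coherent.
Context {X : Type} (D : (X -> R) -> Prop) (HD : coherent_D D).

Lemma coherent_gamble f : D f -> gamble f.
Proof. apply HD. Qed.

Lemma coherent_pos f : pos_gamble f -> D f.
Proof. intros (Hg & Hn & Hz). apply HD; auto. Qed.

Lemma coherent_scal f l : D f -> 0 < l -> D (fun x => l * f x).
Proof. apply HD. Qed.

Lemma coherent_add f g : D f -> D g -> D (fun x => f x + g x).
Proof. apply HD. Qed.

Lemma coherent_witness f : D f -> exists x, 0 < f x.
Proof.
  intros Hf. apply NNPP. intros Hno. apply (proj2 (proj2 (proj2 (proj2 HD))) f); auto.
  intros x. apply Rnot_lt_le. intros Hx. apply Hno. eauto.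
Qed.

Lemma coherent_one : forall x : X, D (fun _ => 1).
Proof.
  intros x. apply coherent_pos.
  split; [apply gamble_const|split; [intros; lra|exists x; lra]].
Qed.

Lemma coherent_above d f : D d -> gamble f -> (forall x, d x <= f x) -> D f.
Proof.
  intros Hd Hf Hle.
  destruct (classic (exists x, f x - d x <> 0)) as [Hnz|Hz].
  - replace f with (fun x => d x + (f x - d x)) by (extensionality x; ring).
    apply coherent_add; [auto|apply coherent_pos].
    split; [|split; [intros x; specialize (Hle x); lra|auto]].
    replace (fun x => f x - d x) with (fun x => 1 * f x + -1 * d x) by (extensionality x; ring).
    apply gamble_lin; [auto|apply coherent_gamble, Hd].
  - replace f with d; [auto|]. extensionality x. apply NNPP. intros Hne. apply Hz. exists x. lra.
Qed.

Lemma coherent_rsum n (c : nat -> R) (fs : nat -> X -> R) :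
  (forall i, (i < n)%nat -> 0 <= c i /\ D (fs i)) -> (exists i, (i < n)%nat /\ 0 < c i) ->
  D (fun x => rsum n (fun i => c i * fs i x)).
Proof.
  induction n as [|n IH]; intros H [i0 [Hi0 Hci0]]; [lia|]. simpl.
  destruct (H n (Nat.lt_succ_diag_r n)) as [[Hcn|Hcn] Hfn].
  - destruct (classic (exists i, (i < n)%nat /\ 0 < c i)) as [Hex|Hnone].
    + apply coherent_add; [apply IH; [intros; apply H; lia|auto]|apply coherent_scal; auto].
    + replace (fun x => rsum n (fun i => c i * fs i x) + c n * fs n x)
        with (fun x => c n * fs n x); [apply coherent_scal; auto|].
      extensionality x. rewrite rsum_zero; [ring|].
      intros i Hi. destruct (H i (Nat.le_le_succ_r _ _ Hi)) as [[Hci|Hci] _];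
        [|rewrite <- Hci; ring].
      exfalso. apply Hnone. eauto.
  - rewrite <- Hcn.
    replace (fun x => rsum n (fun i => c i * fs i x) + 0 * fs n x)
      with (fun x => rsum n (fun i => c i * fs i x)) by (extensionality x; ring).
    apply IH; [intros; apply H; lia|].
    exists i0. split; [|auto]. destruct (Nat.eq_dec i0 n) as [->|]; [lra|lia].
Qed.

Lemma coherent_posi (A : (X -> R) -> Prop) f : (forall g, A g -> D g) -> posi A f -> D f.
Proof.
  intros HA [n [c [fs [Hn [Hfs Hf]]]]].
  replace f with (fun x => rsum n (fun i => c i * fs i x)) by (extensionality x; auto).
  apply coherent_rsum.
  - intros i Hi. destruct (Hfs i Hi). split; [lra|auto].
  - exists 0%nat. split; [lia|apply Hfs; lia].
Qed.

Lemma coherent_no_nonpositive_combination n (a : nat -> X -> R) :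
  (forall i, (i < n)%nat -> D (a i)) -> no_nonpositive_combination n a.
Proof.
  intros Ha c Hc Hc0. apply coherent_witness, coherent_rsum; auto.
Qed.

End Coherent.

(* Each generator of [dprod] ([a(y2) I_E(y1)], [b(y1) I_F(y2)] or a nonnegative gamble)
   is represented uniformly by [gen_val]; the weights [g_wa], [g_wb] select its kind. *)
Record prod_gen (X1 X2 : Type) := ProdGen {
  g_wa : R; g_a : X2 -> R; g_E : X1 -> bool;
  g_wb : R; g_b : X1 -> R; g_F : X2 -> bool;
  g_h : X1 * X2 -> R }.
Arguments ProdGen {X1 X2}.
Arguments g_wa {X1 X2}. Arguments g_a {X1 X2}. Arguments g_E {X1 X2}.
Arguments g_wb {X1 X2}. Arguments g_b {X1 X2}. Arguments g_F {X1 X2}. Arguments g_h {X1 X2}.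

Definition gen_val {X1 X2 : Type} (t : prod_gen X1 X2) (p : X1 * X2) : R :=
  g_wa t * (g_a t (snd p) * indic (g_E t) (fst p))
  + g_wb t * (g_b t (fst p) * indic (g_F t) (snd p)) + g_h t p.

Definition gen_scale {X1 X2 : Type} (c : R) (t : prod_gen X1 X2) : prod_gen X1 X2 :=
  ProdGen (c * g_wa t) (g_a t) (g_E t) (c * g_wb t) (g_b t) (g_F t) (fun p => c * g_h t p).

Record gen_ok {X1 X2 : Type} (D1 : (X1 -> R) -> Prop) (D2 : (X2 -> R) -> Prop)
  (t : prod_gen X1 X2) : Prop := {
  ok_wa : 0 <= g_wa t;
  ok_wb : 0 <= g_wb t;
  ok_a : D2 (g_a t);
  ok_b : D1 (g_b t);
  ok_E : nonempty_event (g_E t);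
  ok_F : nonempty_event (g_F t);
  ok_h : forall p, 0 <= g_h t p;
  ok_nontrivial : 0 < g_wa t \/ 0 < g_wb t \/ exists p, 0 < g_h t p }.

Lemma gen_val_scale {X1 X2 : Type} c (t : prod_gen X1 X2) p :
  gen_val (gen_scale c t) p = c * gen_val t p.
Proof. unfold gen_val, gen_scale. simpl. ring. Qed.

Lemma gen_ok_scale {X1 X2 : Type} D1 D2 c (t : prod_gen X1 X2) :
  0 < c -> gen_ok D1 D2 t -> gen_ok D1 D2 (gen_scale c t).
Proof.
  intros Hc [Hwa Hwb Ha Hb HE HF Hh Hnt]. split; simpl; auto.
  - apply Rmult_le_pos; lra.
  - apply Rmult_le_pos; lra.
  - intros p. apply Rmult_le_pos; [lra|auto].
  - destruct Hnt as [H|[H|[p H]]]; [left; nra|right; left; nra|right; right; exists p; nra].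
Qed.

Lemma pl_lin3 {X : Type} (L : (X -> R) -> R) a b f g h : positive_linear L ->
  L (fun x => a * f x + b * g x + h x) = a * L f + b * L g + L h.
Proof. intros HL. rewrite !(pl_add _ HL), !(pl_scal _ HL). reflexivity. Qed.

Section GeneratorSums.
Context {X1 X2 : Type} (D1 : (X1 -> R) -> Prop) (D2 : (X2 -> R) -> Prop).
Hypotheses (HD1 : coherent_D D1) (HD2 : coherent_D D2).
Context (n : nat) (t : nat -> prod_gen X1 X2) (Ht : forall i, (i < n)%nat -> gen_ok D1 D2 (t i)).

Let G (p : X1 * X2) : R := rsum n (fun i => gen_val (t i) p).

Lemma gen_sum_section (L : (X2 -> R) -> R) y1 : positive_linear L ->
  L (fun y2 => G (y1, y2))
  = rsum n (fun i => g_wa (t i) * L (g_a (t i)) * indic (g_E (t i)) y1)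
    + rsum n (fun i => g_wb (t i) * L (indic (g_F (t i))) * g_b (t i) y1)
    + rsum n (fun i => L (fun y2 => g_h (t i) (y1, y2))).
Proof.
  intros HL. unfold G. rewrite (pl_rsum _ HL), <- !rsum_plus. apply rsum_ext. intros i _.
  replace (fun y2 => gen_val (t i) (y1, y2))
    with (fun y2 => g_wa (t i) * indic (g_E (t i)) y1 * g_a (t i) y2
                    + g_wb (t i) * g_b (t i) y1 * indic (g_F (t i)) y2 + g_h (t i) (y1, y2))
    by (extensionality y2; unfold gen_val; simpl; ring).
  rewrite pl_lin3 by auto. ring.
Qed.

Lemma gen_sum_section_lower (L : (X2 -> R) -> R) y1 : positive_linear L ->
  (forall i, (i < n)%nat -> 0 <= g_wa (t i) * L (g_a (t i))) ->
  rsum n (fun i => g_wa (t i) * L (g_a (t i)) * indic (g_E (t i)) y1)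
  + rsum n (fun i => g_wb (t i) * L (indic (g_F (t i))) * g_b (t i) y1)
  <= L (fun y2 => G (y1, y2)).
Proof.
  intros HL Ha. rewrite gen_sum_section by auto.
  assert (0 <= rsum n (fun i => L (fun y2 => g_h (t i) (y1, y2)))); [|lra].
  apply rsum_nonneg. intros i Hi. apply (pl_nonneg _ HL). intros y2. apply (ok_h _ _ _ (Ht i Hi)).
Qed.

Lemma gen_sum_positive_from_b (L : (X2 -> R) -> R) : positive_linear L ->
  (forall i, (i < n)%nat -> 0 <= g_wa (t i) * L (g_a (t i))) ->
  (exists i, (i < n)%nat /\ 0 < g_wb (t i) * L (indic (g_F (t i)))) ->
  exists p, 0 < G p.
Proof.
  intros HL Ha Hb.
  destruct (coherent_no_nonpositive_combination D1 HD1 n (fun i => g_b (t i))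
              (fun i Hi => ok_b _ _ _ (Ht i Hi)) (fun i => g_wb (t i) * L (indic (g_F (t i)))))
    as [y1 Hy1]; auto.
  { intros i Hi. apply Rmult_le_pos; [apply (ok_wb _ _ _ (Ht i Hi))|].
    apply (pl_nonneg _ HL). intros. apply indic_bounds. }
  destruct (pl_witness L HL (fun y2 => G (y1, y2))) as [y2 Hy2]; [|eauto].
  pose proof (gen_sum_section_lower L y1 HL Ha).
  assert (0 <= rsum n (fun i => g_wa (t i) * L (g_a (t i)) * indic (g_E (t i)) y1)); [|lra].
  apply rsum_nonneg. intros i Hi. apply Rmult_le_pos; [auto|apply indic_bounds].
Qed.

Lemma gen_sum_positive_from_a (L : (X2 -> R) -> R) i0 : positive_linear L ->
  (forall i, (i < n)%nat -> 0 < L (g_a (t i))) -> (i0 < n)%nat -> 0 < g_wa (t i0) ->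
  exists p, 0 < G p.
Proof.
  intros HL Ha Hi0 Hwa0.
  assert (Ha' : forall i, (i < n)%nat -> 0 <= g_wa (t i) * L (g_a (t i))).
  { intros i Hi. apply Rmult_le_pos; [apply (ok_wa _ _ _ (Ht i Hi))|left; auto]. }
  destruct (classic (exists i, (i < n)%nat /\ 0 < g_wb (t i) * L (indic (g_F (t i)))))
    as [Hb|Hb]; [apply (gen_sum_positive_from_b L); auto|].
  destruct (ok_E _ _ _ (Ht i0 Hi0)) as [y1 Hy1].
  destruct (pl_witness L HL (fun y2 => G (y1, y2))) as [y2 Hy2]; [|eauto].
  pose proof (gen_sum_section_lower L y1 HL Ha').
  rewrite (rsum_zero n (fun i => _ * _ * g_b (t i) y1)) in H.
  - assert (0 < rsum n (fun i => g_wa (t i) * L (g_a (t i)) * indic (g_E (t i)) y1)); [|lra].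
    apply (rsum_pos _ _ i0); auto.
    + intros i Hi. apply Rmult_le_pos; [auto|apply indic_bounds].
    + rewrite indic_true by auto. rewrite Rmult_1_r. apply Rmult_lt_0_compat; auto.
  - intros i Hi. assert (0 <= g_wb (t i) * L (indic (g_F (t i)))).
    { apply Rmult_le_pos; [apply (ok_wb _ _ _ (Ht i Hi))|].
      apply (pl_nonneg _ HL). intros. apply indic_bounds. }
    destruct H0 as [H0|H0]; [exfalso; apply Hb; eauto|rewrite <- H0; ring].
Qed.

Lemma gen_sum_positive : (1 <= n)%nat -> exists p, 0 < G p.
Proof.
  intros Hn.
  destruct (classic (exists i, (i < n)%nat /\ 0 < g_wa (t i))) as [[i0 [Hi0 Hwa0]]|Hwa].
  { destruct (exists_positive_functional n X2 (fun i => g_a (t i))) as [L [HL HLa]].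
    - apply (coherent_no_nonpositive_combination D2 HD2). intros i Hi. apply (Ht i Hi).
    - apply (gen_sum_positive_from_a L i0); auto. }
  assert (Hwa0 : forall i, (i < n)%nat -> g_wa (t i) = 0).
  { intros i Hi. destruct (ok_wa _ _ _ (Ht i Hi)) as [H|H]; [exfalso; apply Hwa; eauto|auto]. }
  destruct (classic (exists i, (i < n)%nat /\ 0 < g_wb (t i))) as [[i1 [Hi1 Hwb1]]|Hwb].
  { destruct (ok_F _ _ _ (Ht i1 Hi1)) as [y2 Hy2].
    apply (gen_sum_positive_from_b (fun f => f y2)); [apply positive_linear_eval| |].
    - intros i Hi. rewrite Hwa0 by auto. lra.
    - exists i1. split; [auto|]. rewrite indic_true by auto. lra. }
  assert (Hwb0 : forall i, (i < n)%nat -> g_wb (t i) = 0).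
  { intros i Hi. destruct (ok_wb _ _ _ (Ht i Hi)) as [H|H]; [exfalso; apply Hwb; eauto|auto]. }
  assert (Hval : forall i p, (i < n)%nat -> gen_val (t i) p = g_h (t i) p).
  { intros i p Hi. unfold gen_val. rewrite Hwa0, Hwb0 by auto. ring. }
  destruct (ok_nontrivial _ _ _ (Ht 0%nat Hn)) as [H|[H|[p Hp]]];
    [rewrite Hwa0 in H by lia; lra|rewrite Hwb0 in H by lia; lra|].
  exists p. apply (rsum_pos _ _ 0%nat); [|lia|rewrite Hval; auto].
  intros i Hi. rewrite Hval by auto. apply (ok_h _ _ _ (Ht i Hi)).
Qed.

End GeneratorSums.

(* The convex cone generated by [D] and [- k]. *)
Definition adjoin_neg {X : Type} (D : (X -> R) -> Prop) (k f : X -> R) : Prop :=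
  exists l, 0 <= l /\ (D (fun x => f x + l * k x) \/ 0 < l /\ forall x, f x + l * k x = 0).

Section AdjoinNeg.
Context {X : Type} (D : (X -> R) -> Prop) (HD : coherent_D D) (k : X -> R).

Lemma adjoin_neg_incl f : D f -> adjoin_neg D k f.
Proof.
  intros Hf. exists 0. split; [lra|left].
  replace (fun x => f x + 0 * k x) with f by (extensionality x; ring). exact Hf.
Qed.

Lemma adjoin_neg_opp : adjoin_neg D k (fun x => - k x).
Proof. exists 1. split; [lra|right; split; [lra|intros; ring]]. Qed.

Lemma adjoin_neg_add f g : adjoin_neg D k f -> adjoin_neg D k g ->
  adjoin_neg D k (fun x => f x + g x).
Proof.
  intros [l1 [Hl1 H1]] [l2 [Hl2 H2]]. exists (l1 + l2). split; [lra|].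
  replace (fun x => f x + g x + (l1 + l2) * k x)
    with (fun x => (f x + l1 * k x) + (g x + l2 * k x)) by (extensionality x; ring).
  destruct H1 as [H1|[Hp1 Z1]], H2 as [H2|[Hp2 Z2]].
  - left. apply coherent_add; auto.
  - left. replace (fun x => (f x + l1 * k x) + (g x + l2 * k x))
      with (fun x => f x + l1 * k x); [auto|].
    extensionality x. rewrite Z2. ring.
  - left. replace (fun x => (f x + l1 * k x) + (g x + l2 * k x))
      with (fun x => g x + l2 * k x); [auto|].
    extensionality x. rewrite Z1. ring.
  - right. split; [lra|]. intros x. specialize (Z1 x). specialize (Z2 x). nra.
Qed.

Lemma adjoin_neg_scal f a : adjoin_neg D k f -> 0 < a -> adjoin_neg D k (fun x => a * f x).
Proof.
  intros [l [Hl H]] Ha. exists (a * l). split; [nra|].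
  replace (fun x => a * f x + a * l * k x) with (fun x => a * (f x + l * k x))
    by (extensionality x; ring).
  destruct H as [H|[Hp Z]]; [left; apply coherent_scal; auto|right; split; [nra|]].
  intros x. replace (a * f x + a * l * k x) with (a * (f x + l * k x)) by ring. rewrite Z. ring.
Qed.

Lemma adjoin_neg_coherent : gamble k -> ~ D k -> (exists x, k x <> 0) ->
  coherent_D (adjoin_neg D k).
Proof.
  intros Hk HDk Hnz. split; [|split; [|split; [|split]]].
  - intros f [l [_ H]].
    replace f with (fun x => 1 * (f x + l * k x) + (- l) * k x) by (extensionality x; ring).
    apply gamble_lin; [|auto]. destruct H as [H|[_ Z]]; [apply (coherent_gamble D HD), H|].
    replace (fun x => f x + l * k x) with (fun _ : X => 0); [apply gamble_const|].
    extensionality x. rewrite Z. reflexivity.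
  - intros f Hg Hnn Hf. apply adjoin_neg_incl, (coherent_pos D HD). split; auto.
  - intros f a Hf Ha. apply adjoin_neg_scal; auto.
  - intros f g Hf Hg. apply adjoin_neg_add; auto.
  - intros f Hle [l [Hl [H|[Hp Z]]]]; apply HDk.
    + destruct Hl as [Hl| <-].
      * apply (coherent_above D HD (fun x => / l * (f x + l * k x))); auto.
        -- apply coherent_scal; auto. apply Rinv_0_lt_compat, Hl.
        -- intros x. specialize (Hle x).
           replace (/ l * (f x + l * k x)) with (/ l * f x + k x) by (field; lra).
           assert (0 <= / l) by (left; apply Rinv_0_lt_compat, Hl). nra.
      * exfalso. replace (fun x => f x + 0 * k x) with f in H by (extensionality x; ring).
        destruct (coherent_witness D HD f H) as [x Hx]. specialize (Hle x). lra.
    + apply (coherent_pos D HD). split; [auto|split; [|auto]].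
      intros x. specialize (Hle x). specialize (Z x). nra.
Qed.

End AdjoinNeg.

Lemma nonempty_event_or_full {X : Type} (x : X) (Bs : (X -> bool) -> Prop) B :
  (forall B', Bs B' -> nonempty_event B') -> Bs B \/ B = (fun _ => true) -> nonempty_event B.
Proof. intros HBs [HB| ->]; [auto|exists x; reflexivity]. Qed.

Section Product.
Context {X1 X2 : Type} (x1 : X1) (x2 : X2).
Context (B1s : (X1 -> bool) -> Prop) (B2s : (X2 -> bool) -> Prop).
Hypotheses (hB1 : forall B, B1s B -> nonempty_event B) (hB2 : forall B, B2s B -> nonempty_event B).

Section ProductCoherence.
Context (D1 : (X1 -> R) -> Prop) (D2 : (X2 -> R) -> Prop).
Hypotheses (HD1 : coherent_D D1) (HD2 : coherent_D D2).

Lemma dprod_generator_repr f :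
  (A12 B1s D2 f \/ A21 B2s D1 f) \/ pos_gamble f ->
  exists t, gen_ok D1 D2 t /\ f = gen_val t.
Proof.
  pose proof (coherent_one D1 HD1 x1) as H1. pose proof (coherent_one D2 HD2 x2) as H2.
  intros [[[f2 [B1 [Hf2 [HB1 ->]]]]|[f1 [B2 [Hf1 [HB2 ->]]]]]|Hf].
  - exists (ProdGen 1 f2 B1 0 (fun _ => 1) (fun _ => true) (fun _ => 0)). split.
    + split; simpl; intros; auto; try lra.
      * apply (nonempty_event_or_full x1 B1s); auto.
      * exists x2. reflexivity.
    + extensionality p. unfold gen_val. simpl. ring.
  - exists (ProdGen 0 (fun _ => 1) (fun _ => true) 1 f1 B2 (fun _ => 0)). split.
    + split; simpl; intros; auto; try lra.
      * exists x1. reflexivity.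
      * apply (nonempty_event_or_full x2 B2s); auto.
    + extensionality p. unfold gen_val. simpl. ring.
  - exists (ProdGen 0 (fun _ => 1) (fun _ => true) 0 (fun _ => 1) (fun _ => true) f). split.
    + destruct Hf as (_ & Hnn & [p Hp]). split; simpl; intros; auto; try lra.
      * exists x1. reflexivity.
      * exists x2. reflexivity.
      * right. right. exists p. specialize (Hnn p). lra.
    + extensionality p. unfold gen_val. simpl. ring.
Qed.

Lemma dprod_normal_form g : dprod B1s B2s D1 D2 g ->
  exists n (t : nat -> prod_gen X1 X2), (1 <= n)%nat /\
    (forall i, (i < n)%nat -> gen_ok D1 D2 (t i)) /\
    forall p, g p = rsum n (fun i => gen_val (t i) p).
Proof.
  intros Hg.
  destruct (posi_param _ (gen_ok D1 D2) gen_val g dprod_generator_repr Hg)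
    as [n [c [t [Hn [Ht Hgt]]]]].
  exists n, (fun i => gen_scale (c i) (t i)). split; [auto|split].
  - intros i Hi. destruct (Ht i Hi). apply gen_ok_scale; auto.
  - intros p. rewrite Hgt. apply rsum_ext. intros i _. rewrite gen_val_scale. reflexivity.
Qed.

Lemma dprod_positive g : dprod B1s B2s D1 D2 g -> exists p, 0 < g p.
Proof.
  intros Hg. destruct (dprod_normal_form g Hg) as [n [t [Hn [Ht Hgt]]]].
  destruct (gen_sum_positive D1 D2 HD1 HD2 n t Ht Hn) as [p Hp].
  exists p. rewrite Hgt. exact Hp.
Qed.

Lemma dprod_coherent : coherent_D (dprod B1s B2s D1 D2).
Proof.
  split; [|split; [|split; [|split]]].
  - intros g Hg. refine (posi_gamble _ g _ Hg).
    intros f [[[f2 [B1 [Hf2 [_ ->]]]]|[f1 [B2 [Hf1 [_ ->]]]]]|[Hf _]]; auto.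
    + apply (gamble_mul_indic f2 B1 snd fst), (coherent_gamble D2 HD2), Hf2.
    + apply (gamble_mul_indic f1 B2 fst snd), (coherent_gamble D1 HD1), Hf1.
  - intros f Hg Hnn Hnz. apply posi_single. right. split; auto.
  - intros f l Hf Hl. apply posi_scal; auto.
  - intros f g Hf Hg. apply posi_plus; auto.
  - intros f Hle Hf. destruct (dprod_positive f Hf) as [p Hp]. specialize (Hle p). lra.
Qed.

End ProductCoherence.

Lemma dprod_mono (D1 D1' : (X1 -> R) -> Prop) (D2 : (X2 -> R) -> Prop) g :
  (forall f, D1 f -> D1' f) -> dprod B1s B2s D1 D2 g -> dprod B1s B2s D1' D2 g.
Proof.
  intros H. apply posi_incl.
  intros f [[HA|[f1 [B2 [Hf1 [HB2 ->]]]]]|Hf]; [left; left; auto|left; right|right; auto].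
  exists f1, B2. auto.
Qed.

Section Marginals.
Context (D1 : (X1 -> R) -> Prop) (D2 : (X2 -> R) -> Prop).
Hypotheses (HD1 : coherent_D D1) (HD2 : coherent_D D2).

Lemma dprod_ext1_iff (k : X1 -> R) (B : X2 -> bool) :
  gamble k -> B2s B \/ B = (fun _ => true) ->
  (dprod B1s B2s D1 D2 (fun p => k (fst p) * indic B (snd p)) <-> D1 k).
Proof.
  intros Hk HB. split; [|intros HDk; apply posi_single; left; right; exists k, B; auto].
  intros Hd. apply NNPP. intros HDk.
  destruct (classic (exists x, k x <> 0)) as [Hnz|Hz].
  - pose proof (adjoin_neg_coherent D1 HD1 k Hk HDk Hnz) as HD1'.
    assert (Hneg : dprod B1s B2s (adjoin_neg D1 k) D2 (fun p => - k (fst p) * indic B (snd p))).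
    { apply posi_single. left. right. exists (fun x => - k x), B.
      split; [apply adjoin_neg_opp|auto]. }
    pose proof (dprod_mono D1 (adjoin_neg D1 k) D2 _ (adjoin_neg_incl D1 k) Hd) as Hd'.
    destruct (dprod_positive _ D2 HD1' HD2 _ (posi_plus _ _ _ Hd' Hneg)) as [p Hp].
    lra.
  - destruct (dprod_positive D1 D2 HD1 HD2 _ Hd) as [p Hp].
    replace (k (fst p)) with 0 in Hp; [lra|].
    apply NNPP. intros Hne. apply Hz. exists (fst p). auto.
Qed.

Lemma lowprev_dprod_ext1 (f : X1 -> R) (B1 : X1 -> bool) (B2 : X2 -> bool) :
  gamble f -> B2s B2 \/ B2 = (fun _ => true) ->
  lowprev_D (dprod B1s B2s D1 D2) (ext1 f) (erect B1 B2) = lowprev_D D1 f B1.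
Proof.
  intros Hf HB2. apply Lub_Rbar_eqset. intros mu.
  rewrite <- (dprod_ext1_iff (cgamble f mu B1) B2 (gamble_cgamble f mu B1 Hf) HB2).
  replace (cgamble (ext1 f) mu (erect B1 B2))
    with (fun p : X1 * X2 => cgamble f mu B1 (fst p) * indic B2 (snd p)); [tauto|].
  extensionality p. unfold cgamble, ext1, erect, indic.
  destruct (B1 (fst p)), (B2 (snd p)); simpl; ring.
Qed.

End Marginals.

End Product.

Definition swap_fun {X1 X2 Y : Type} (g : X1 * X2 -> Y) (q : X2 * X1) : Y := g (snd q, fst q).

Lemma swap_fun_involutive {X1 X2 Y : Type} (g : X1 * X2 -> Y) : swap_fun (swap_fun g) = g.
Proof. extensionality p. destruct p. reflexivity. Qed.

Lemma posi_comp {X Y : Type} (A : (X -> R) -> Prop) (A' : (Y -> R) -> Prop) (s : Y -> X) g :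
  (forall f, A f -> A' (fun y => f (s y))) -> posi A g -> posi A' (fun y => g (s y)).
Proof.
  intros HA [n [c [fs [Hn [Hfs Hg]]]]]. exists n, c, (fun i y => fs i (s y)).
  split; [auto|split; [intros i Hi; destruct (Hfs i Hi); auto|intros y; apply Hg]].
Qed.

Lemma dprod_swap {X1 X2 : Type} B1s B2s (D1 : (X1 -> R) -> Prop) (D2 : (X2 -> R) -> Prop) g :
  dprod B1s B2s D1 D2 g -> dprod B2s B1s D2 D1 (swap_fun g).
Proof.
  unfold swap_fun. apply (posi_comp _ _ (fun q => (snd q, fst q))).
  intros f [[[f2 [B1 [Hf2 [HB1 ->]]]]|[f1 [B2 [Hf1 [HB2 ->]]]]]|[[M HM] [Hnn [p Hp]]]].
  - left. right. exists f2, B1. auto.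
  - left. left. exists f1, B2. auto.
  - right. split; [exists M; intros; apply HM|split; [intros; apply Hnn|]].
    exists (snd p, fst p). destruct p. exact Hp.
Qed.

Lemma lowprev_dprod_swap {X1 X2 : Type} B1s B2s (D1 : (X1 -> R) -> Prop)
  (D2 : (X2 -> R) -> Prop) f B :
  lowprev_D (dprod B1s B2s D1 D2) f B
  = lowprev_D (dprod B2s B1s D2 D1) (swap_fun f) (swap_fun B).
Proof.
  apply Lub_Rbar_eqset. intros mu. split; intros H.
  - exact (dprod_swap _ _ _ _ _ H).
  - rewrite <- (swap_fun_involutive (cgamble f mu B)). exact (dprod_swap _ _ _ _ _ H).
Qed.

Lemma lowprev_dprod_ext2 {X1 X2 : Type} (x1 : X1) (x2 : X2) B1s B2s
  (hB1 : forall B, B1s B -> nonempty_event B) (hB2 : forall B, B2s B -> nonempty_event B)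
  (D1 : (X1 -> R) -> Prop) (D2 : (X2 -> R) -> Prop) (HD1 : coherent_D D1) (HD2 : coherent_D D2)
  (f : X2 -> R) (B1 : X1 -> bool) (B2 : X2 -> bool) :
  gamble f -> B1s B1 \/ B1 = (fun _ => true) ->
  lowprev_D (dprod B1s B2s D1 D2) (ext2 f) (erect B1 B2) = lowprev_D D2 f B2.
Proof.
  intros Hf HB1. rewrite lowprev_dprod_swap.
  replace (swap_fun (erect B1 B2)) with (erect B2 B1)
    by (extensionality q; unfold swap_fun, erect; apply andb_comm).
  exact (lowprev_dprod_ext1 x2 x1 B2s B1s hB2 hB1 D2 D1 HD2 HD1 f B2 B1 Hf HB1).
Qed.

Lemma eext1_erect {X1 X2 : Type} (B : X1 -> bool) :
  @eext1 X1 X2 B = erect B (fun _ => true).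
Proof. extensionality p. unfold eext1, erect. rewrite andb_true_r. reflexivity. Qed.

Lemma Lub_Rbar_gt (E : R -> Prop) (mu : R) : Rbar_lt mu (Lub_Rbar E) -> exists m, E m /\ mu < m.
Proof.
  intros Hlt. apply NNPP. intros Hno.
  apply (Rbar_lt_not_le _ _ Hlt), (proj2 (Lub_Rbar_correct E)).
  intros x Ex. apply Rnot_lt_le. intros Hx. apply Hno. eauto.
Qed.

Lemma Lub_Rbar_eq_dense (E F : R -> Prop) : (forall x, E x -> F x) ->
  (forall x : R, Rbar_lt x (Lub_Rbar F) -> E x) -> Lub_Rbar E = Lub_Rbar F.
Proof.
  intros HEF HFE. apply Rbar_le_antisym.
  - apply (is_lub_Rbar_subset F E); auto; apply Lub_Rbar_correct.
  - apply Rbar_not_lt_le. intros Hlt.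
    assert (Hmid : exists mu : R, Rbar_lt (Lub_Rbar E) mu /\ Rbar_lt mu (Lub_Rbar F)).
    { destruct (Lub_Rbar E) as [l| |], (Lub_Rbar F) as [r| |]; simpl in Hlt |- *;
        try contradiction.
      - exists ((l + r) / 2). split; lra.
      - exists (l + 1). split; [lra|auto].
      - exists (r - 1). split; [auto|lra].
      - exists 0. split; auto. }
    destruct Hmid as [mu [H1 H2]].
    apply (Rbar_lt_not_le _ _ H1), (proj1 (Lub_Rbar_correct E)), HFE, H2.
Qed.

Section NaturalExtension.
Context {X : Type} (C : (X -> R) -> (X -> bool) -> Prop) (P : (X -> R) -> (X -> bool) -> Rbar).
Hypothesis hC : sub_CX C.

Lemma E_of_P_incl (W : (X -> R) -> Prop) : coherent_D W ->
  (forall f B, C f B -> P f B = lowprev_D W f B) -> forall g, E_of_P C P g -> W g.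
Proof.
  intros HW hW g Hg. refine (coherent_posi W HW _ g _ Hg).
  intros h [[f [B [mu [HfB [Hlt ->]]]]]|Hh]; [|apply (coherent_pos W HW), Hh].
  rewrite (hW f B HfB) in Hlt. destruct (Lub_Rbar_gt _ _ Hlt) as [m [Hm Hmu]].
  apply (coherent_above W HW (cgamble f m B)); [auto|apply gamble_cgamble, (proj1 (hC f B HfB))|].
  intros x. unfold cgamble. pose proof (indic_bounds B x). nra.
Qed.

Lemma E_of_P_coherent : coherent_lp C P -> coherent_D (E_of_P C P).
Proof.
  intros [W [HW hW]]. pose proof (E_of_P_incl W HW hW) as Hincl.
  split; [|split; [|split; [|split]]].
  - intros f Hf. apply (coherent_gamble W HW), Hincl, Hf.
  - intros f Hg Hnn Hnz. apply posi_single. right. split; auto.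
  - intros f l Hf Hl. apply posi_scal; auto.
  - intros f g Hf Hg. apply posi_plus; auto.
  - intros f Hle Hf. destruct (coherent_witness W HW f (Hincl f Hf)) as [x Hx].
    specialize (Hle x). lra.
Qed.

Lemma lowprev_E_of_P f B : coherent_lp C P -> C f B -> lowprev_D (E_of_P C P) f B = P f B.
Proof.
  intros [W [HW hW]] HfB. rewrite (hW f B HfB).
  apply Lub_Rbar_eq_dense; [intros mu; apply (E_of_P_incl W HW hW)|].
  intros mu Hmu. apply posi_single. left. exists f, B, mu.
  rewrite (hW f B HfB). auto.
Qed.

End NaturalExtension.

Theorem proposition44 (X1 X2 : Type) (x1 : X1) (x2 : X2)
  (B1s : (X1 -> bool) -> Prop) (B2s : (X2 -> bool) -> Prop)
  (hB1 : forall B, B1s B -> nonempty_event B)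
  (hB2 : forall B, B2s B -> nonempty_event B)
  (C1 : (X1 -> R) -> (X1 -> bool) -> Prop) (P1 : (X1 -> R) -> (X1 -> bool) -> Rbar)
  (C2 : (X2 -> R) -> (X2 -> bool) -> Prop) (P2 : (X2 -> R) -> (X2 -> bool) -> Rbar)
  (hC1 : sub_CX C1) (hP1 : coherent_lp C1 P1)
  (hC2 : sub_CX C2) (hP2 : coherent_lp C2 P2)
  (C : (X1 * X2 -> R) -> (X1 * X2 -> bool) -> Prop)
  (hC : sub_CX C) (hind : indep_domain B1s B2s C)
  (hC1C : forall f B, C1 f B -> C (ext1 f) (eext1 B))
  (hC2C : forall f B, C2 f B -> C (ext2 f) (eext2 B)) :
  indep_product B1s B2s C1 P1 C2 P2 C (lp_prod B1s B2s C1 P1 C2 P2).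
Proof.
  pose proof (E_of_P_coherent C1 P1 hC1 hP1) as HE1.
  pose proof (E_of_P_coherent C2 P2 hC2 hP2) as HE2.
  pose proof (lowprev_dprod_ext1 x1 x2 B1s B2s hB1 hB2 _ _ HE1 HE2) as H1.
  pose proof (lowprev_dprod_ext2 x1 x2 B1s B2s hB1 hB2 _ _ HE1 HE2) as H2.
  unfold lp_prod. split; [split; [auto|split; [auto|split; [|split]]]|split].
  - exists (dprod B1s B2s (E_of_P C1 P1) (E_of_P C2 P2)).
    split; [apply dprod_coherent|]; auto.
  - intros f B1 B2 [Hf _] _ HB2.
    rewrite eext1_erect, !H1; auto.
  - intros f B2 B1 [Hf _] _ HB1.
    change (eext2 B2) with (erect (fun _ : X1 => true) B2). rewrite !H2; auto.
  - intros f B HfB. rewrite eext1_erect, H1, lowprev_E_of_P; auto. apply (hC1 f B HfB).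
  - intros f B HfB. change (eext2 B) with (erect (fun _ : X1 => true) B).
    rewrite H2, lowprev_E_of_P; auto. apply (hC2 f B HfB).
Qed.
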